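(* Let $N\ge1$, let $\mathbf{K}\in\mathbb{R}^{N\times N}$ be the cyclic shift matrix ($(\mathbf{K}\mathbf{x})_1=x_N$, $(\mathbf{K}\mathbf{x})_i=x_{i-1}$ for $i\ge2$), so $\mathbf{K}^{-1}=\mathbf{K}^T$, let $\mathbf{K}(\nu)=(1-\nu)\mathbf{I}+\nu\mathbf{K}$, and $\mathbf{L}_h=N^2(\mathbf{K}+\mathbf{K}^T-2\mathbf{I})$. For $\tilde\nu\in\mathbb{R}$ with integer part $s=\lfloor\tilde\nu\rfloor$ and fractional part $\nu=\tilde\nu-s$, define $\mathcal{K}(\tilde\nu)=\mathbf{K}^s\mathbf{K}(\nu)$ (with $\mathbf{K}^s=(\mathbf{K}^T)^{-s}$ for $s<0$). Let $\tilde\nu,\tilde\omega\in\mathbb{R}$ with fractional parts $\nu=\tilde\nu-\lfloor\tilde\nu\rfloor$, $\omega=\tilde\omega-\lfloor\tilde\omega\rfloor$. Then (a) $\mathcal{K}(\tilde\nu)\mathcal{K}(\tilde\omega)=\mathcal{K}(\tilde\omega)\mathcal{K}(\tilde\nu)$; (b) $\mathcal{K}(\tilde\nu)\mathcal{K}(\tilde\omega)^T=\mathcal{K}(\tilde\omega)^T\mathcal{K}(\tilde\nu)$; (c) if $0\le\nu,\omega\le1$ and $\nu+\omega\le1$, then $\mathcal{K}(\tilde\nu)\mathcal{K}(\tilde\omega)=\mathcal{K}(\tilde\nu+\tilde\omega)+\frac{1}{N^2}\mathbf{C}$, where $\mathbf{C}$ is a scalar multiple of a shifted discrete Laplacian $\mathbf{K}^m\mathbf{L}_h$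 for some integer $m$; (d) for every $\mathbf{u}\in\mathbb{R}^N$, $\sum_{j=1}^N u_j=\sum_{j=1}^N(\mathcal{K}(\tilde\nu)\mathbf{u})_j$.
   Context: $\mathbf{I}$ is the $N\times N$ identity; $\mathcal{K}(\tilde\nu)$ is an upwind-type (large time-step) transport by a real shift $\tilde\nu$: an integer cyclic shift followed by linear interpolation between neighbouring cells. *)

From HB Require Import structures.
From mathcomp Require Import all_boot all_order all_algebra.
From mathcomp Require Import reals.
Set Implicit Arguments. Unset Strict Implicit. Unset Printing Implicit Defensive.
Import Order.TTheory GRing.Theory Num.Theory.
Local Open Scope ring_scope.

Section Defs.
Variables (R : realType) (N : nat).

Definition Kshift : 'M[R]_N :=
  \matrix_(i < N, j < N) (((i : nat) == (j.+1 %% N)%N)%:R : R).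

Definition mxpow (A : 'M[R]_N) (k : nat) : 'M[R]_N := iter k (fun B => A *m B) 1%:M.

Definition Kpow (s : int) : 'M[R]_N :=
  match s with
  | Posz k => mxpow Kshift k
  | Negz k => mxpow Kshift^T k.+1
  end.

Definition Knu (nu : R) : 'M[R]_N := (1 - nu)%:M + nu *: Kshift.

Definition fracpart (x : R) : R := x - (Num.floor x)%:~R.

Definition Kcal (nt : R) : 'M[R]_N := Kpow (Num.floor nt) *m Knu (fracpart nt).

Definition Lh : 'M[R]_N := ((N%:R : R) ^+ 2) *: (Kshift + Kshift^T - 2%:M).

End Defs.

From HB Require Import structures.
From mathcomp Require Import all_boot all_order all_algebra perm.
From mathcomp Require Import reals.

(* K is the permutation matrix of the cyclic shift, hence orthogonal:
   K^T = K^-1.  Every Kcal x = K^s ((1 - nu) + nu K) lies in the bicommutant of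
   K, which is commutative and, K being orthogonal, closed under transposition;
   this gives (a) and (b).  Writing K(nu) = 1 + nu (K - 1) one gets
   K(nu) K(om) = K(nu + om) + nu om (K - 1)^2 and K (K + K^T - 2) = (K - 1)^2,
   so (c) follows from Kcal (s + t) = K^s K(t) for integer s and 0 <= t <= 1
   (at t = 1 this is K^(s+1) K(0) = K^s K(1)).  Finally the all-ones row is
   fixed by every permutation matrix, hence by each Kcal x: this is (d). *)

Set Implicit Arguments.
Unset Strict Implicit.
Unset Printing Implicit Defensive.
Import Order.TTheory GRing.Theory Num.Theory.
Local Open Scope ring_scope.

Section Bicommutant.
Variable R : pzRingType.
Implicit Types a x y : R.

Definition bicommutant a x := forall y, GRing.comm y a -> GRing.comm y x.

Lemma bicommutant_refl a : bicommutant a a.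
Proof. by []. Qed.

Lemma bicommutant1 a : bicommutant a 1.
Proof. by move=> y _; apply: commr1. Qed.

Lemma bicommutantB a x y :
  bicommutant a x -> bicommutant a y -> bicommutant a (x - y).
Proof. by move=> hx hy z za; apply: commrB; [apply: hx | apply: hy]. Qed.

Lemma bicommutantD a x y :
  bicommutant a x -> bicommutant a y -> bicommutant a (x + y).
Proof. by move=> hx hy z za; apply: commrD; [apply: hx | apply: hy]. Qed.

Lemma bicommutantM a x y :
  bicommutant a x -> bicommutant a y -> bicommutant a (x * y).
Proof. by move=> hx hy z za; apply: commrM; [apply: hx | apply: hy]. Qed.

Lemma bicommutant_comm a x y :
  bicommutant a x -> bicommutant a y -> GRing.comm x y.
Proof. by move=> hx hy; apply: hy; apply/commr_sym/hx. Qed.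

End Bicommutant.

Lemma bicommutantXz (R : unitRingType) (a x : R) (z : int) :
  bicommutant a x -> bicommutant a (x ^ z).
Proof. by move=> hx y ya; apply/commrXz/hx. Qed.

Lemma bicommutantZ (K : comNzRingType) (A : algType K) (a x : A) (k : K) :
  bicommutant a x -> bicommutant a (k *: x).
Proof.
move=> hx y ya; rewrite -mulr_algl.
by apply: commrM; [apply: commr_sym; apply: comm_alg | apply: hx].
Qed.

(* The commutant of an orthogonal matrix is closed under transposition. *)
Lemma bicommutant_tr (R : comUnitRingType) n (A B : 'M[R]_n.+1) :
  A^T = A^-1 -> bicommutant A B -> bicommutant A B^T.
Proof.
move=> AtE hB Y YA.
have YtA : GRing.comm Y^T A.
  rewrite -[A]invrK -AtE; apply: commrV.
  by rewrite /GRing.comm -!mulmxE -!trmx_mul mulmxE YA.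
by rewrite /GRing.comm -[Y]trmxK -!mulmxE -!trmx_mul !mulmxE (hB _ YtA).
Qed.

Lemma mulr_fixr_exprz (R : unitRingType) (x a : R) (z : int) :
  a \is a GRing.unit -> x * a = x -> x * a ^ z = x.
Proof.
move=> ua xa; have xaX k : x * a ^+ k = x.
  by elim: k => [|k IH]; rewrite ?mulr1 // exprSr mulrA IH.
case: z => k; first exact: xaX.
by rewrite NegzE -invr_expz -{1}(xaX k.+1) mulrK // unitrX.
Qed.

Lemma mulr_add1Z (K : comNzRingType) (A : algType K) (x y : K) (d : A) :
  (1 + x *: d) * (1 + y *: d) = 1 + (x + y) *: d + (x * y) *: d ^+ 2.
Proof.
rewrite mulrDl !mulrDr !mul1r mulr1 -scalerAl -scalerAr scalerA expr2 scalerDl.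
by rewrite !addrA [1 + y *: d + _]addrAC.
Qed.

Lemma const_mx_mul_perm (R : pzSemiRingType) m n (a : R) (s : 'S_n) :
  const_mx a *m perm_mx s = const_mx a :> 'M_(m, n).
Proof. by rewrite -[s]invgK -col_permE; apply/matrixP => i j; rewrite !mxE. Qed.

Lemma fracpart_ge0 (R : realType) (x : R) : 0 <= fracpart x.
Proof. by rewrite subr_ge0 floor_le. Qed.

Lemma const_mx1_mulmxE (R : pzSemiRingType) m n (u : 'cV[R]_n) (i : 'I_m) :
  (const_mx 1 *m u) i 0 = \sum_j u j 0.
Proof. by rewrite mxE; apply: eq_bigr => j _; rewrite mxE mul1r. Qed.

Lemma Kshift_perm (R : realType) N : Kshift R N = perm_mx (perm (@ord_pred_inj N)).
Proof.
apply/matrixP => i j; rewrite !mxE permE.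
by rewrite -(inj_eq (@ordS_inj N)) ord_predK.
Qed.

Section CyclicShift.
Variables (R : realType) (n : nat).
Local Notation N := n.+1.
Local Notation K := (Kshift R N).

Lemma Kshift_tr : K^T = K^-1.
Proof. by rewrite Kshift_perm tr_perm_mx perm_mxV. Qed.

Lemma Kshift_unit : K \is a GRing.unit.
Proof. by rewrite Kshift_perm; apply: unitmx_perm. Qed.

Lemma mxpowE (A : 'M[R]_N) k : mxpow A k = A ^+ k.
Proof.
by elim: k => [|k IH]; rewrite /mxpow /= ?idmxE // -/(mxpow A k) IH exprS.
Qed.

Lemma KpowE z : Kpow R N z = K ^ z.
Proof. by case: z => k; rewrite /Kpow mxpowE // Kshift_tr exprVn. Qed.

Lemma KnuE x : Knu N x = 1 + x *: (K - 1).
Proof. by rewrite /Knu -scalemx1 scalerBl scale1r scalerBr addrA addrAC. Qed.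

Lemma KcalE x : Kcal N x = K ^ Num.floor x * Knu N (fracpart x).
Proof. by rewrite /Kcal KpowE mulmxE. Qed.

Lemma bicommutant_Kpow z : bicommutant K (K ^ z).
Proof. exact/bicommutantXz/bicommutant_refl. Qed.

Lemma bicommutant_Knu x : bicommutant K (Knu N x).
Proof.
rewrite KnuE; apply: bicommutantD; first exact: bicommutant1.
by apply/bicommutantZ/bicommutantB; [apply: bicommutant_refl | apply: bicommutant1].
Qed.

Lemma bicommutant_Kcal x : bicommutant K (Kcal N x).
Proof.
rewrite KcalE; apply: bicommutantM; first exact: bicommutant_Kpow.
exact: bicommutant_Knu.
Qed.

Lemma Kcal_intrD (s : int) (t : R) :
  0 <= t <= 1 -> Kcal N (s%:~R + t) = K ^ s * Knu N t.
Proof.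
case/andP=> t_ge0 t_le1; rewrite /Kcal KpowE mulmxE.
have [t_lt1 | t_ge1] := ltrP t 1.
  have fl : Num.floor (s%:~R + t) = s.
    by apply: floor_def; rewrite lerDl t_ge0 intrD ltrD2l t_lt1.
  by rewrite /fracpart fl addrC addKr.
have -> : t = 1 by apply/eqP; rewrite eq_le t_le1 t_ge1.
have fl : Num.floor (s%:~R + 1 : R) = s + 1.
  by rewrite floorDrz ?rpred1 // intrKfloor floor1.
rewrite /fracpart fl intrD subrr exprzDr ?Kshift_unit // expr1z -mulrA.
by rewrite !KnuE scale0r addr0 scale1r addrC subrK mulr1.
Qed.

Lemma Knu_mul x y :
  Knu N x * Knu N y = Knu N (x + y) + (x * y) *: (K - 1) ^+ 2.
Proof. by rewrite !KnuE mulr_add1Z. Qed.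

Lemma Kshift_mul_laplacian : K * (K + K^T - 2%:M) = (K - 1) ^+ 2.
Proof.
rewrite Kshift_tr sqrrB1 mulrBr mulrDr mulrV ?Kshift_unit // -expr2.
by rewrite -mulmxE mul_mx_scalar scaler_nat addrAC.
Qed.

Lemma Kpow_mul_Lh z :
  Kpow R N (z + 1) *m Lh R N = N%:R ^+ 2 *: (K ^ z * (K - 1) ^+ 2).
Proof.
rewrite KpowE /Lh exprzDr ?Kshift_unit // expr1z -scalemxAr mulmxE.
by rewrite -mulrA Kshift_mul_laplacian.
Qed.

Lemma Kcal_mul x y : fracpart x + fracpart y <= 1 ->
  Kcal N x * Kcal N y =
    Kcal N (x + y) + (fracpart x * fracpart y) *:
                       (K ^ (Num.floor x + Num.floor y) * (K - 1) ^+ 2).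
Proof.
move=> frac_le1.
have xyE : x + y = (Num.floor x + Num.floor y)%:~R + (fracpart x + fracpart y).
  by rewrite intrD addrACA !subrKC.
rewrite xyE Kcal_intrD; last by rewrite frac_le1 andbT addr_ge0 ?fracpart_ge0.
rewrite !KcalE.
have comm_Knu_Kpow : GRing.comm (Knu N (fracpart x)) (K ^ Num.floor y).
  by apply: bicommutant_comm; [apply: bicommutant_Knu | apply: bicommutant_Kpow].
rewrite mulrA -(mulrA _ (Knu N _)) comm_Knu_Kpow mulrA -exprzDr ?Kshift_unit //.
by rewrite -mulrA Knu_mul mulrDr -scalerAr.
Qed.

Lemma const_mx_mul_Kcal (a : R) x : const_mx a * Kcal N x = const_mx a.
Proof.
have aK : const_mx a * K = const_mx a.
  by rewrite Kshift_perm -mulmxE const_mx_mul_perm.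
rewrite KcalE mulrA mulr_fixr_exprz ?Kshift_unit // KnuE.
by rewrite mulrDr mulr1 -scalerAr mulrBr aK mulr1 subrr scaler0 addr0.
Qed.

End CyclicShift.

Theorem lemma3p3 (R : realType) (N : nat) (hN : (0 < N)%N) (nt wt : R) :
  let nu := fracpart nt in
  let om := fracpart wt in
  [/\ Kcal N nt *m Kcal N wt = Kcal N wt *m Kcal N nt,
      Kcal N nt *m (Kcal N wt)^T = (Kcal N wt)^T *m Kcal N nt,
      (0 <= nu <= 1 -> 0 <= om <= 1 -> nu + om <= 1 ->
        exists (c : R) (m : int),
          Kcal N nt *m Kcal N wt =
            Kcal N (nt + wt) + (1 / (N%:R ^+ 2)) *: (c *: (Kpow R N m *m Lh R N)))
    & forall u : 'cV[R]_N,
        \sum_(j < N) u j 0 = \sum_(j < N) (Kcal N nt *m u) j 0].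
Proof.
case: N hN => [//|n] _ nu om; split.
- by rewrite mulmxE; apply: bicommutant_comm; apply: bicommutant_Kcal.
- rewrite mulmxE; apply: (bicommutant_comm (bicommutant_Kcal _)).
  by apply: bicommutant_tr; [apply: Kshift_tr | apply: bicommutant_Kcal].
- (* the bounds 0 <= nu, om <= 1 hold for every fractional part *)
  move=> _ _ frac_le1; exists (nu * om), (Num.floor nt + Num.floor wt + 1).
  have N2_neq0 : (n.+1%:R : R) ^+ 2 != 0 by rewrite expf_neq0 ?pnatr_eq0.
  rewrite Kpow_mul_Lh mulmxE Kcal_mul // !scalerA mulrAC.
  by rewrite div1r mulVf // mul1r.
- move=> u; rewrite -!(@const_mx1_mulmxE _ n.+1 _ _ ord0) mulmxA mulmxE.
  by rewrite const_mx_mul_Kcal.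
Qed.
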